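(* Let $N$ be a binary orchard network and let $N'$ be the directed graph obtained from $N$ by an rSPR move. If $N'$ admits an HGT-consistent labelling (in the sense for directed graphs given below), then $N'$ is a network; that is, the rSPR move is valid.
   Context: A (directed phylogenetic) network on a finite taxa set $X$ is a directed acyclic graph without parallel arcs whose nodes are of the following types: a unique root (indegree 0, outdegree 1); tree nodes (indegree 1, outdegree at least 2); reticulations (indegree at least 2, outdegree 1); leaves (indegree 1, outdegree 0), the leaves being bijectively labelled by $X$. A network is binary if every tree node and every reticulation has total degree exactly 3. A tree is a network without reticulations. Orchard networks: An ordered pair of leaves $(x,y)$ is a cherry if $x$ and $y$ have a common parent; it is a reticulated cherry if the parent $p_x$ of $x$ is a reticulation and $p_x$ and $y$ have a common parent. Let $p_x,p_y$ be the parents of $x,y$. Reducing $(x,y)$ in a network $N$: if $(x,y)$ is a cherry, delete $x$ and suppress $p_x$ if it now has indegree 1 and outdegree 1; if $(x,y)$ is a reticulated cherry, delete the arc $(p_y,p_x)$ and suppress any resulting node of indegree 1 and outdegree 1; otherwise do nothing. (Suppressing a node $v$ with one parent $u$ and one child $w$ means deleting $v$ and adding the arc $(u,w)$.) $N$ is orchard if some sequence of such reductions turns $N$ into a tree with exactly one leaf. rSPR move: Let $N$ be a binary network with an arc $(z,w)$ and an arc $e$ with endpoints $x$ and $y$ (either $e=(x,y)$ or $e=(y,x)$), and let $p$ and $c$ be, respectively, the parent and the child of $x$ other than $y$. The rSPR move $(p,x,c)\xrightarrow{e}(z,w)$ replaces the arcs $(p,x)$, $(x,c)$, $(z,w)$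 by the arcs $(p,c)$, $(z,x)$, $(x,w)$. The move is valid if the resulting directed graph is a network. HGT-consistent labelling of a directed graph: Let $D=(V,A)$ be a directed graph, possibly with parallel arcs, in which every node has indegree and outdegree at most 2 and total degree at most 3. An HGT-consistent labelling of $D$ is a map $t:V\to\mathbb{R}$ such that (1) for every arc $(u,v)$, $t(u)\le t(v)$, and equality is allowed only if $v$ has indegree 2; (2) every node $u$ with at least one child has a child $v$ with $t(u)<t(v)$; (3) for every node $r$ with two parents $u$ and $v$, exactly one of $t(u)=t(r)$ and $t(v)=t(r)$ holds. *)

From Stdlib Require Import Reals.
From mathcomp Require Import all_boot.
Set Implicit Arguments. Unset Strict Implicit. Unset Printing Implicit Defensive.

Section Graphs.
Variable T : finType.

(* A directed (multi)graph: a finite node set and a list of arcs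
   (a list, so that parallel arcs can be represented). *)
Record graph := Graph { gV : {set T}; gA : seq (T * T) }.

Definition indeg (G : graph) (v : T) : nat := count (fun a => a.2 == v) (gA G).
Definition outdeg (G : graph) (v : T) : nat := count (fun a => a.1 == v) (gA G).
Definition parents (G : graph) (v : T) : seq T := [seq a.1 | a <- gA G & a.2 == v].
Definition children (G : graph) (v : T) : seq T := [seq a.2 | a <- gA G & a.1 == v].
Definition arcrel (G : graph) : rel T := fun u v => (u, v) \in gA G.

Definition is_root (G : graph) v := (indeg G v == 0) && (outdeg G v == 1).
Definition is_tree_node (G : graph) v := (indeg G v == 1) && (1 < outdeg G v).
Definition is_retic (G : graph) v := (1 < indeg G v) && (outdeg G v == 1).
Definition is_leaf (G : graph) v := (v \in gV G) && (indeg G v == 1) && (outdeg G v == 0).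

Definition leaf_set (G : graph) : {set T} := [set v in gV G | is_leaf G v].

Definition is_network (G : graph) : Prop :=
  [/\ all (fun a => (a.1 \in gV G) && (a.2 \in gV G)) (gA G),
      uniq (gA G),
      (forall u v, (u, v) \in gA G -> ~~ connect (arcrel G) v u),
      #|[set v in gV G | indeg G v == 0]| = 1 &
      (forall v, v \in gV G ->
         [|| is_root G v, is_tree_node G v, is_retic G v | is_leaf G v])].

(* network on the taxa set X (leaves identified with their labels) *)
Definition network_on (X : {set T}) (G : graph) : Prop :=
  is_network G /\ leaf_set G = X.

Definition is_binary_network (G : graph) : Prop :=
  is_network G /\
  (forall v, v \in gV G ->
     (is_tree_node G v -> outdeg G v = 2) /\ (is_retic G v -> indeg G v = 2)).

Definition is_tree (G : graph) : Prop :=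
  is_network G /\ (forall v, v \in gV G -> ~~ is_retic G v).

Definition parent_of (G : graph) (v : T) : T := head v (parents G v).
Definition child_of (G : graph) (v : T) : T := head v (children G v).

Definition suppress (G : graph) (v : T) : graph :=
  if (v \in gV G) && (indeg G v == 1) && (outdeg G v == 1) then
    Graph (gV G :\ v)
          ((parent_of G v, child_of G v)
             :: [seq a <- gA G | (a.1 != v) && (a.2 != v)])
  else G.

Definition delete_node (G : graph) (x : T) : graph :=
  Graph (gV G :\ x) [seq a <- gA G | (a.1 != x) && (a.2 != x)].

Definition is_cherry (G : graph) (x y : T) : bool :=
  [&& is_leaf G x, is_leaf G y, x != y & parent_of G x == parent_of G y].

Definition is_ret_cherry (G : graph) (x y : T) : bool :=
  [&& is_leaf G x, is_leaf G y, is_retic G (parent_of G x)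
    & (parent_of G y, parent_of G x) \in gA G].

Definition reduce (G : graph) (xy : T * T) : graph :=
  let: (x, y) := xy in
  let px := parent_of G x in
  let py := parent_of G y in
  if is_cherry G x y then suppress (delete_node G x) px
  else if is_ret_cherry G x y then
    suppress (suppress (Graph (gV G) (rem (py, px) (gA G))) px) py
  else G.

Definition orchard (G : graph) : Prop :=
  exists s : seq (T * T),
    is_tree (foldl reduce G s) /\ #|leaf_set (foldl reduce G s)| = 1.

Definition rSPR (G : graph) (p x c z w : T) : graph :=
  Graph (gV G)
        ([:: (p, c); (z, x); (x, w)] ++ rem (z, w) (rem (x, c) (rem (p, x) (gA G)))).

Definition HGT_consistent (D : graph) (t : T -> R) : Prop :=
  [/\ (forall v, v \in gV D ->
         indeg D v <= 2 /\ outdeg D v <= 2 /\ indeg D v + outdeg D v <= 3),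
      (forall u v, (u, v) \in gA D ->
         Rle (t u) (t v) /\ (t u = t v -> indeg D v = 2)),
      (forall u, u \in gV D -> 0 < outdeg D u ->
         exists v, (u, v) \in gA D /\ Rlt (t u) (t v)) &
      (forall r u v, r \in gV D -> parents D r = [:: u; v] ->
         (t u = t r <-> ~ (t v = t r)))].

End Graphs.

(* An rSPR move only reroutes three arcs, so it preserves the vertex set and
   every in- and out-degree; hence node types, the root and the leaves are
   unchanged, and being a network reduces to acyclicity and the absence of
   parallel arcs.  Both follow from an HGT-consistent labelling t: t is
   monotone along paths, so a cycle through an arc (u, v) forces t u = t v,
   which makes v a reticulation; then v has a single child, which lies on
   the cycle, yet must carry a label strictly above t v.  A pair of parallel
   arcs (u, r) makes u both parents of r, violating the requirement that
   exactly one parent of a reticulation shares its label. *)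
From Stdlib Require Import Reals.
From mathcomp Require Import all_boot.
From mathcomp Require Import zify.

Set Implicit Arguments.
Unset Strict Implicit.
Unset Printing Implicit Defensive.

Section SeqFacts.
Variable A : eqType.

Lemma count_le1_eq (P : pred A) (s : seq A) a b :
  count P s <= 1 -> a \in s -> b \in s -> P a -> P b -> a = b.
Proof.
move=> le1 sa sb Pa Pb; apply/eqP/negPn/negP => neq_ab.
have sb' : b \in rem a s by apply: rem_mem; rewrite // eq_sym.
move: le1; rewrite ((permP (perm_to_rem sa)) P) /= Pa.
rewrite ((permP (perm_to_rem sb')) P) /= Pb; lia.
Qed.

Lemma not_uniq_count_mem (s : seq A) : ~~ uniq s -> exists a, 1 < count_mem a s.
Proof.
move=> not_uniq_s; have [/hasP [a _ ?]|] := boolP (has (fun a => 1 < count_mem a s) s).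
  by exists a.
move/hasPn => le1; case/negP: not_uniq_s; apply: count_mem_uniq => a.
have [sa|/count_memPn -> //] := boolP (a \in s).
have pos : 0 < count_mem a s by rewrite -has_count has_pred1.
by have := le1 a sa; rewrite -leqNgt; lia.
Qed.

Lemma count_mem_pair (s : seq A) u : size s <= 2 -> 1 < count_mem u s -> s = [:: u; u].
Proof.
move=> size_s cnt.
have size2 : size s = 2 by have := count_size (pred1 u) s; lia.
have /all_pred1P -> : all (pred1 u) s.
  by rewrite all_count size2 eqn_leq cnt -size2 count_size.
by rewrite size2.
Qed.

End SeqFacts.

Section Graphs.
Variable T : finType.
Implicit Types (G D : graph T).

Definition arcs_in_nodes G : bool :=
  all (fun a => (a.1 \in gV G) && (a.2 \in gV G)) (gA G).

Lemma count_mem_parents G u r :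
  count_mem (u, r) (gA G) <= count_mem u (parents G r).
Proof.
rewrite count_map count_filter; apply: sub_count => -[a b] /= /eqP [-> ->].
by rewrite !eqxx.
Qed.

Section HGTLabelling.
Variables (D : graph T) (t : T -> R).
Hypotheses (arcsD : arcs_in_nodes D) (tD : HGT_consistent D t).

Lemma HGT_connect_le a b : connect (arcrel D) a b -> Rle (t a) (t b).
Proof.
case: tD => _ arc_le _ _; case/connectP => q; elim: q a => [|s q IH] a /=.
  by move=> _ ->; apply: Rle_refl.
by case/andP => /arc_le [le_as _] /IH le_sb /le_sb; apply: Rle_trans.
Qed.

Lemma HGT_acyclic u v : (u, v) \in gA D -> ~~ connect (arcrel D) v u.
Proof.
case: (tD) => deg arc_le child_gt _ uv; apply/negP => vu.
have [le_uv eq_retic] := arc_le u v uv.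
have eq_uv : t u = t v by apply: Rle_antisym => //; apply: HGT_connect_le.
have vV : v \in gV D by case/andP: (allP arcsD _ uv).
have [_ [_ deg_v]] := deg v vV; have in2 := eq_retic eq_uv.
have [s vs su] : exists2 s, (v, s) \in gA D & connect (arcrel D) s u.
  case/connectP: vu => [[|s q]] /=.
    by move=> _ eq_uv'; rewrite eq_uv' in uv *; exists v.
  by case/andP => vs sq ->; exists s => //; apply/connectP; exists q.
have out_v : 0 < outdeg D v by rewrite /outdeg -has_count; apply/hasP; exists (v, s).
have [s' [vs' lt_vs']] := child_gt v vV out_v.
(* v is a reticulation, so its labelled-above child s' is the child s on the cycle *)
have out1 : outdeg D v <= 1 by lia.
have [eq_s] := count_le1_eq out1 vs' vs (eqxx v) (eqxx v).
rewrite eq_s -eq_uv in lt_vs'.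
exact: Rlt_irrefl (Rlt_le_trans _ _ _ lt_vs' (HGT_connect_le su)).
Qed.

Lemma HGT_uniq : uniq (gA D).
Proof.
case: tD => deg _ _ one_parent_equal.
apply/negP => /negP /not_uniq_count_mem [[u r] dup].
have ur : (u, r) \in gA D by rewrite -has_pred1 has_count; lia.
have /andP [_ rV] := allP arcsD _ ur.
have [in_r _] := deg r rV.
have parents_r : parents D r = [:: u; u].
  apply: count_mem_pair (leq_trans dup (count_mem_parents D u r)).
  by rewrite size_map size_filter.
by have := one_parent_equal r u u rV parents_r; tauto.
Qed.

End HGTLabelling.

Section DegreePreserving.
Variables G G' : graph T.
Hypotheses (eqV : gV G' = gV G) (eq_in : indeg G' =1 indeg G)
  (eq_out : outdeg G' =1 outdeg G).

Lemma leaf_set_degree_eq : leaf_set G' = leaf_set G.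
Proof. by apply/setP => v; rewrite !inE /is_leaf eqV eq_in eq_out. Qed.

Lemma is_network_HGT_degree_eq t :
  is_network G -> arcs_in_nodes G' -> HGT_consistent G' t -> is_network G'.
Proof.
case=> _ _ _ one_root types arcsG' tG'; split => //.
- exact: HGT_uniq arcsG' tG'.
- exact: HGT_acyclic arcsG' tG'.
- by rewrite -one_root eqV; apply: eq_card => v; rewrite !inE eq_in.
- move=> v; rewrite eqV => /types.
  by rewrite /is_root /is_tree_node /is_retic /is_leaf eqV !eq_in !eq_out.
Qed.

End DegreePreserving.

Section RSPRMove.
Variables (N : graph T) (p x c z w : T).
Hypotheses (px : (p, x) \in gA N) (xc : (x, c) \in gA N) (zw : (z, w) \in gA N)
  (p_neq_x : p != x) (z_neq_x : z != x) (w_neq_x : w != x).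

Lemma perm_rSPR_arcs :
  perm_eq (gA N)
    ([:: (p, x); (x, c); (z, w)] ++ rem (z, w) (rem (x, c) (rem (p, x) (gA N)))).
Proof.
have xc' : (x, c) \in rem (p, x) (gA N).
  by apply: rem_mem => //; apply: contra_neq p_neq_x => -[->].
have zw' : (z, w) \in rem (x, c) (rem (p, x) (gA N)).
  apply: rem_mem; first by apply: contra_neq z_neq_x => -[->].
  by apply: rem_mem => //; apply: contra_neq w_neq_x => -[_ ->].
apply: perm_trans (perm_to_rem px) _; rewrite /= perm_cons.
by apply: perm_trans (perm_to_rem xc') _; rewrite perm_cons perm_to_rem.
Qed.

Lemma indeg_rSPR : indeg (rSPR N p x c z w) =1 indeg N.
Proof. by move=> v; rewrite /indeg (permP perm_rSPR_arcs) /= addnCA. Qed.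

Lemma outdeg_rSPR : outdeg (rSPR N p x c z w) =1 outdeg N.
Proof.
by move=> v; rewrite /outdeg (permP perm_rSPR_arcs) /=; congr (_ + _); rewrite addnCA.
Qed.

Lemma arcs_in_nodes_rSPR : arcs_in_nodes N -> arcs_in_nodes (rSPR N p x c z w).
Proof.
move=> /allP arcsN; have /andP [pV xV] := arcsN _ px.
have /andP [_ cV] := arcsN _ xc; have /andP [zV wV] := arcsN _ zw.
apply/allP => a /=; rewrite !inE => /or4P [| | |/mem_rem/mem_rem/mem_rem/arcsN //].
all: by move=> /eqP -> /=; apply/andP.
Qed.

End RSPRMove.

End Graphs.

Theorem mainTheorem8 (T : finType) (X : {set T}) (N : graph T) (p x c y z w : T) :
  network_on X N -> is_binary_network N -> orchard N ->
  (* the arc e with endpoints x and y; p, c are the parent and child of x other than y *)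
  (p, x) \in gA N -> (x, c) \in gA N ->
  (((x, y) \in gA N /\ y != c) \/ ((y, x) \in gA N /\ y != p)) ->
  (* the target arc (z,w), not incident to x *)
  (z, w) \in gA N -> z != x -> w != x ->
  (exists t : T -> R, HGT_consistent (rSPR N p x c z w) t) ->
  network_on X (rSPR N p x c z w).
Proof.
move=> [netN leavesN] _ _ px xc _ zw z_neq_x w_neq_x [t tN'].
have [arcsN _ acyclicN _ _] := netN.
have p_neq_x : p != x by apply: contraTneq (acyclicN _ _ px) => ->; rewrite connect0.
have eq_in := indeg_rSPR px xc zw p_neq_x z_neq_x w_neq_x.
have eq_out := outdeg_rSPR px xc zw p_neq_x z_neq_x w_neq_x.
split; last by rewrite (leaf_set_degree_eq _ eq_in eq_out).
apply: is_network_HGT_degree_eq eq_in eq_out _ netN _ tN' => //.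
exact: arcs_in_nodes_rSPR.
Qed.
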